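(* Let $p>q>1$ be relatively prime integers. A sequence $\mathbf{x}=x_0x_1\cdots$ over a finite alphabet $A$ is $\frac pq$-automatic if and only if, for every $a\in A$, there exists a $\frac pq$-recognizable set $R_a$ such that $\{i\in\mathbb{N}: x_i=a\}=R_a\cap\mathbb{N}$.
   Context: $A_p=\{0,\ldots,p-1\}$; for $w=w_\ell\cdots w_0\in A_p^*$, $\mathrm{val}_{\frac pq}(w)=\sum_{i=0}^{\ell}\frac{w_i}{q}(\frac pq)^i$ (a rational number); $\mathrm{rep}_{\frac pq}(n)$ is the unique word not starting with $0$ of value $n$ ($\mathrm{rep}_{\frac pq}(0)=\varepsilon$). $\mathbf{x}$ is $\frac pq$-automatic if there is a deterministic finite automaton with output $(Q,q_0,A_p,\delta,\tau:Q\to A)$ with $x_n=\tau(\delta(q_0,\mathrm{rep}_{\frac pq}(n)))$ for all $n$. Let $N_{\frac pq}=\mathrm{val}_{\frac pq}(A_p^* )$. A subset $X\subseteq N_{\frac pq}$ is $\frac pq$-recognizable if there is a deterministic finite automaton over $A_p$ accepting a language $L$ with $\mathrm{val}_{\frac pq}(L)=X$. *)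

From mathcomp Require Import all_boot all_order all_algebra.
Set Implicit Arguments. Unset Strict Implicit. Unset Printing Implicit Defensive.
Import Order.TTheory GRing.Theory Num.Theory.

(* Words over A_p = {0,...,p-1} are represented as seq nat, written
   w = w_l ... w_0 from left to right (w_0 is the last element). *)
Definition in_Ap (p : nat) (w : seq nat) : bool := all (fun a => a < p) w.

Definition valpq (p q : nat) (w : seq nat) : rat :=
  (\sum_(i < size w) ((nth 0 (rev w) i)%:R / q%:R) * (p%:R / q%:R) ^+ i)%R.

(* rep_{p/q}(n): computed by the standard algorithm
   q n = p m + a, a = (q n) mod p, rep(n) = rep(m) a, rep(0) = epsilon.
   Since m < n for n > 0 (p > q), n steps of fuel suffice. *)
Fixpoint rep_fuel (p q k n : nat) : seq nat :=
  match k with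
  | 0 => [::]
  | k'.+1 => if n == 0 then [::]
             else rcons (rep_fuel p q k' ((q * n) %/ p)) ((q * n) %% p)
  end.

Definition reppq (p q n : nat) : seq nat := rep_fuel p q n n.

Definition step (p : nat) (Q : finType) (delta : Q -> 'I_p -> Q) (s : Q) (a : nat) : Q :=
  if @insub nat (fun k => k < p) 'I_p a is Some b then delta s b else s.

Definition run (p : nat) (Q : finType) (delta : Q -> 'I_p -> Q) (s : Q) (w : seq nat) : Q :=
  foldl (step delta) s w.

Definition pq_automatic (p q : nat) (A : Type) (x : nat -> A) : Prop :=
  exists (Q : finType) (q0 : Q) (delta : Q -> 'I_p -> Q) (tau : Q -> A),
    forall n, x n = tau (run delta q0 (reppq p q n)).

Definition pq_recognizable (p q : nat) (X : rat -> Prop) : Prop :=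
  exists (Q : finType) (q0 : Q) (delta : Q -> 'I_p -> Q) (F : pred Q),
    forall r : rat, X r <-> exists w : seq nat,
      [/\ in_Ap p w, run delta q0 w \in F & valpq p q w = r].

From mathcomp Require Import all_boot all_order all_algebra.
From mathcomp Require Import zify ring.
From Stdlib Require Import IndefiniteDescription.
Set Implicit Arguments. Unset Strict Implicit. Unset Printing Implicit Defensive.
Import Order.TTheory GRing.Theory Num.Theory.

(* Since p and q are coprime, a word over A_p has an integer value n only if
   it is 0^k rep(n): peeling off the last digit a of a word of value n leaves
   a word of value m with p m + a = q n, which is exactly the step of the
   algorithm computing rep(n).  Hence a set of integers is the trace of a
   p/q-recognizable set iff some automaton decides it on the representations
   rep(n): leading zeros are absorbed by a subset construction over the states
   reachable on zeros in one direction, and skipped by an extra initial state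
   in the other.  A DFAO for x is then the product of the automata deciding
   the sets x^-1(a), a in A. *)

Record dfa (p : nat) := Dfa {
  dfa_state : finType;
  dfa_start : dfa_state;
  dfa_trans : dfa_state -> 'I_p -> dfa_state;
  dfa_final : pred dfa_state }.
Arguments dfa_start {p} d.
Arguments dfa_trans {p} d.
Arguments dfa_final {p} d.

Definition accepts p (D : dfa p) (w : seq nat) : bool :=
  run (dfa_trans D) (dfa_start D) w \in dfa_final D.

Section Runs.
Variables (p : nat) (Q : finType) (d : Q -> 'I_p -> Q).

Lemma run_cat s u v : run d s (u ++ v) = run d (run d s u) v.
Proof. exact: foldl_cat. Qed.

Lemma run_nseq0 s k : run d s (nseq k 0) = iter k (step d ^~ 0) s.
Proof. by elim: k s => [//|k IH] s; rewrite iterSr -IH. Qed.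

End Runs.

Section ZeroSkipping.
Variables (p : nat) (D : dfa p).

Definition skip0_trans (o : option (dfa_state D)) (b : 'I_p) : option (dfa_state D) :=
  match o with
  | Some s => Some (dfa_trans D s b)
  | None => if val b == 0 then None else Some (dfa_trans D (dfa_start D) b)
  end.

Definition skip0 : dfa p :=
  Dfa None skip0_trans [pred o | odflt (dfa_start D) o \in dfa_final D].

Lemma run_skip0_Some s w : run skip0_trans (Some s) w = Some (run (dfa_trans D) s w).
Proof. by elim: w s => //= c w IH s; rewrite /step; case: insubP => /=. Qed.

Lemma accepts_skip0_nseq0 k w : accepts skip0 (nseq k 0 ++ w) = accepts skip0 w.
Proof.
rewrite /accepts run_cat run_nseq0.
suff -> : iter k (step skip0_trans ^~ 0) None = None by [].
by elim: k => //= k ->; rewrite /step; case: insubP => // b _ /= ->.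
Qed.

Lemma accepts_skip0 w : 0 < head 0 w < p -> accepts skip0 w = accepts D w.
Proof.
case: w => [|c w] //= /andP [c_gt0 c_lt_p]; rewrite /accepts /= /step.
case: insubP => [b _ /= bc|]; last by rewrite c_lt_p.
by rewrite bc eqn0Ngt c_gt0 run_skip0_Some.
Qed.

End ZeroSkipping.

Section ZeroPadding.
Variables (p : nat) (D : dfa p).

Definition zero_orbit : {set dfa_state D} :=
  [set s | fconnect (step (dfa_trans D) ^~ 0) (dfa_start D) s].

Definition pad0_trans (X : {set dfa_state D}) (b : 'I_p) : {set dfa_state D} :=
  [set dfa_trans D s b | s in X].

Definition pad0 : dfa p :=
  Dfa zero_orbit pad0_trans [pred X : {set _} | [exists s in X, s \in dfa_final D]].

Lemma run_pad0 X w : run pad0_trans X w = [set run (dfa_trans D) s w | s in X].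
Proof.
elim: w X => [|c w IH] X /=; first by rewrite imset_id.
have step_pad0 : step pad0_trans X c = [set step (dfa_trans D) s c | s in X].
  by rewrite /step; case: insubP => // _; rewrite imset_id.
by rewrite /run /= -/(run _ _ w) IH step_pad0 -imset_comp.
Qed.

Lemma accepts_pad0 w : accepts pad0 w <-> exists k, accepts D (nseq k 0 ++ w).
Proof.
rewrite /accepts run_pad0 /=; set zero := step (dfa_trans D) ^~ 0; split.
  case/existsP=> t /andP [/imsetP [s]]; rewrite inE => /iter_findex <- -> fin_t.
  by exists (findex zero (dfa_start D) s); rewrite run_cat run_nseq0.
case=> k; rewrite run_cat run_nseq0 => fin_k.
apply/existsP; exists (run (dfa_trans D) (iter k zero (dfa_start D)) w).
by rewrite fin_k andbT; apply: imset_f; rewrite inE fconnect_iter.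
Qed.

End ZeroPadding.

Section Product.
Variables (p : nat) (A : finType) (D : A -> dfa p).

Definition prod_state := {dffun forall a : A, dfa_state (D a)}.

Definition prod_trans (g : prod_state) (b : 'I_p) : prod_state :=
  [ffun a => dfa_trans (D a) (g a) b].

Lemma run_prod g w a : run prod_trans g w a = run (dfa_trans (D a)) (g a) w.
Proof.
elim: w g => //= c w IH g; rewrite /run /= -/(run _ _ w) IH /step.
by case: insubP => // b _ _; rewrite ffunE.
Qed.

End Product.

Lemma valpq_rcons p q u a :
  valpq p q (rcons u a) = (p%:R / q%:R * valpq p q u + a%:R / q%:R)%R.
Proof.
rewrite /valpq size_rcons big_ord_recl rev_rcons /= expr0 mulr1 addrC big_distrr.
by congr (_ + _)%R; apply: eq_bigr => i _ /=; rewrite exprS; ring.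
Qed.

Lemma valpq_nseq0_cat p q k w : valpq p q (nseq k 0 ++ w) = valpq p q w.
Proof.
elim: k => //= k <-; move: (nseq k 0 ++ w) => {}w.
rewrite /valpq /= big_ord_recr /= rev_cons nth_rcons.
rewrite size_rev ltnn eqxx !mul0r addr0; apply: eq_bigr => i _.
by rewrite nth_rcons size_rev ltn_ord.
Qed.

Section Numeration.
Variables p q : nat.
Hypotheses (q_gt0 : 0 < q) (q_lt_p : q < p).

Let p_gt0 : 0 < p. Proof. exact: ltn_trans q_lt_p. Qed.
Let q_neq0 : (q%:R != 0 :> rat)%R. Proof. by rewrite pnatr_eq0 -lt0n. Qed.

Lemma divn_mulq_lt n : 0 < n -> (q * n) %/ p < n.
Proof. by move=> n_gt0; rewrite ltn_divLR // mulnC ltn_pmul2l. Qed.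

Lemma rep_fuel_reppq k n : n <= k -> rep_fuel p q k n = reppq p q n.
Proof.
rewrite /reppq; move: {2}n (leqnn n) k => m; elim: m n => [|m IH] n n_le k n_le_k.
  by move: n_le; rewrite leqn0 => /eqP ->; case: k {n_le_k}.
case: n n_le n_le_k => [|n] n_le; first by case: k.
case: k => // k n_le_k /=.
have lt_n := divn_mulq_lt (ltn0Sn n).
by rewrite !(IH ((q * n.+1) %/ p)) //; lia.
Qed.

Lemma reppqS n : 0 < n ->
  reppq p q n = rcons (reppq p q ((q * n) %/ p)) ((q * n) %% p).
Proof.
case: n => // n _; rewrite [LHS]/reppq /= rep_fuel_reppq //.
by have := divn_mulq_lt (ltn0Sn n); lia.
Qed.

Lemma head_reppq n : 0 < n -> 0 < head 0 (reppq p q n) < p.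
Proof.
elim/ltn_ind: n => n IH n_gt0; rewrite reppqS //.
have [m_eq0 | m_gt0] := posnP ((q * n) %/ p).
  rewrite m_eq0 /= ltn_mod p_gt0 andbT lt0n.
  by have := divn_eq (q * n) p; rewrite m_eq0; nia.
by case: (reppq p q _) (IH _ (divn_mulq_lt n_gt0) m_gt0).
Qed.

Lemma in_Ap_reppq n : in_Ap p (reppq p q n).
Proof.
elim/ltn_ind: n => n IH; have [-> //|n_gt0] := posnP n.
by rewrite reppqS // /in_Ap all_rcons ltn_mod p_gt0; exact: IH (divn_mulq_lt n_gt0).
Qed.

Lemma valpq_reppq n : valpq p q (reppq p q n) = (n%:R)%R.
Proof.
elim/ltn_ind: n => n IH; have [-> | n_gt0] := posnP n; first by rewrite /valpq big_ord0.
rewrite reppqS // valpq_rcons IH ?divn_mulq_lt //.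
apply: (mulfI q_neq0); rewrite -natrM [in RHS](divn_eq (q * n) p) natrD natrM.
by field.
Qed.

Lemma valpq_scale_nat u : exists N, (valpq p q u * (q ^ size u)%:R = N%:R)%R.
Proof.
elim/last_ind: u => [|u a [N eN]]; first by exists 0; rewrite /valpq big_ord0 mul0r.
exists (p * N + a * q ^ size u).
by rewrite valpq_rcons size_rcons expnS natrD !natrM -eN; field.
Qed.

Lemma accepts_skip0_reppq (D : dfa p) k n :
  accepts (skip0 D) (nseq k 0 ++ reppq p q n) = accepts D (reppq p q n).
Proof.
rewrite accepts_skip0_nseq0; have [-> // | n_gt0] := posnP n.
exact/accepts_skip0/head_reppq.
Qed.

Hypothesis coprime_pq : coprime p q.

Lemma valpq_rcons_nat u a n : a < p -> valpq p q (rcons u a) = (n%:R)%R ->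
  valpq p q u = (((q * n) %/ p)%:R)%R /\ a = (q * n) %% p.
Proof.
move=> a_lt_p val_n; have [N eN] := valpq_scale_nat u; set t := q ^ size u in eN.
have t_gt0 : 0 < t by rewrite expn_gt0 q_gt0.
have t_neq0 : (t%:R != 0 :> rat)%R by rewrite pnatr_eq0 -lt0n.
have eNn : p * N + a * t = q * n * t.
  apply/eqP; rewrite -(eqr_nat rat) natrD !natrM -eN -val_n valpq_rcons.
  by apply/eqP; field.
have /dvdnP [m Nm] : t %| N.
  rewrite -(Gauss_dvdr _ (coprimeXl _ _ : coprime t p)) 1?coprime_sym //.
  by apply/dvdnP; exists (q * n - a); rewrite mulnBl; lia.
rewrite {N}Nm in eN eNn.
have em : p * m + a = q * n by apply/eqP; rewrite -(eqn_pmul2r t_gt0); lia.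
rewrite -em mulnC divnMDl // modnMDl divn_small // modn_small // addn0.
by split=> //; apply: (mulIf t_neq0); rewrite eN natrM.
Qed.

Lemma valpq_eq_nat w n : in_Ap p w -> valpq p q w = (n%:R)%R ->
  exists k, w = nseq k 0 ++ reppq p q n.
Proof.
elim/last_ind: w n => [|u a IH] n.
  by rewrite /valpq big_ord0 => _ /eqP; rewrite eq_sym pnatr_eq0 => /eqP ->; exists 0.
rewrite /in_Ap all_rcons => /andP [a_lt_p u_Ap] /(valpq_rcons_nat a_lt_p) [val_u ->].
have [k ->] := IH _ u_Ap val_u; have [-> | n_gt0] := posnP n.
  exists k.+1; rewrite muln0 div0n mod0n /= cats0.
  by rewrite -cats1 -[[:: 0]]/(nseq 1 0) -nseqD addn1.
by exists k; rewrite (reppqS n_gt0) rcons_cat.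
Qed.

Lemma exists_valpq_nat (P : pred (seq nat)) n :
  (exists w, [/\ in_Ap p w, P w & valpq p q w = (n%:R)%R]) <->
  exists k, P (nseq k 0 ++ reppq p q n).
Proof.
split=> [[w [w_Ap Pw /(valpq_eq_nat w_Ap) [k ew]]] | [k Pk]].
  by exists k; rewrite -ew.
exists (nseq k 0 ++ reppq p q n); split=> //.
  rewrite /in_Ap all_cat; apply/andP; split; last exact: in_Ap_reppq.
  by apply/allP => c /nseqP [->].
by rewrite valpq_nseq0_cat valpq_reppq.
Qed.

Lemma recognizable_natP (P : nat -> Prop) :
  (exists R, pq_recognizable p q R /\ forall i, P i <-> R (i%:R)%R) <->
  exists D : dfa p, forall n, P n <-> accepts D (reppq p q n).
Proof.
split=> [[R [[Q [s0 [d [F eR]]]] PR]] | [D PD]].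
  exists (pad0 (Dfa s0 d F)) => n; rewrite PR eR accepts_pad0.
  exact: (exists_valpq_nat (accepts (Dfa s0 d F))).
exists (fun r => exists w, [/\ in_Ap p w, accepts (skip0 D) w & valpq p q w = r]).
split.
  by exists (option (dfa_state D)), None, (@skip0_trans p D), (dfa_final (skip0 D)).
move=> n; rewrite (exists_valpq_nat (accepts (skip0 D))) PD.
by split=> [|[k]]; [exists 0 | ]; rewrite accepts_skip0_reppq.
Qed.

End Numeration.

Lemma dfa_of_automatic p q (A : finType) (x : nat -> A) : pq_automatic p q x ->
  forall a, exists D : dfa p, forall n, x n = a <-> accepts D (reppq p q n).
Proof.
case=> [Q [s0 [d [tau ex]]]] a.
by exists (Dfa s0 d [pred s | tau s == a]) => n; rewrite /accepts inE -ex; split=> /eqP.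
Qed.

Lemma automatic_of_dfa p q (A : finType) (x : nat -> A) (D : A -> dfa p) :
  (forall a n, x n = a <-> accepts (D a) (reppq p q n)) -> pq_automatic p q x.
Proof.
move=> xD.
pose tau (g : prod_state D) := odflt (x 0) [pick a | g a \in dfa_final (D a)].
exists (prod_state D), [ffun a => dfa_start (D a)], (@prod_trans p A D), tau => n.
rewrite /tau; case: pickP => [a | none].
  by rewrite run_prod ffunE => /xD.
by move: (none (x n)); rewrite /= run_prod ffunE -/(accepts _ _) (proj1 (xD (x n) n)).
Qed.

Theorem mainTheorem13 (p q : nat) (hcop : coprime p q) (hq : 1 < q) (hpq : q < p)
  (A : finType) (x : nat -> A) :
  pq_automatic p q x <->
  (forall a : A, exists R : rat -> Prop,
     pq_recognizable p q R /\ (forall i : nat, x i = a <-> R (i%:R)%R)).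
Proof.
have q_gt0 : 0 < q by apply: ltn_trans hq.
split=> [/dfa_of_automatic xD a | xR].
  exact: (recognizable_natP q_gt0 hpq hcop (fun i => x i = a)).2.
pose decides a (D : dfa p) := forall n, x n = a <-> accepts D (reppq p q n).
have [D xD] : exists D, forall a, decides a (D a).
  apply: functional_choice => a.
  exact: (recognizable_natP q_gt0 hpq hcop (fun i => x i = a)).1.
exact: automatic_of_dfa xD.
Qed.
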